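(* Let $m\ge0$, let $f:\mathbb{R}^n\to\mathbb{R}$ be $m$-weakly convex, let $x\in\mathbb{R}^n$, $\rho>0$, $\alpha=m+\rho$, and $\Delta:=f(x)-f_\alpha(x)$. Let $\hat x=\arg\min_y\{f(y)+\frac\alpha2\|y-x\|^2\}$ and $w=\rho(x-\hat x)$. Then $w\in\partial_\Delta f(x)$ and $\|w\|\le\sqrt{2\rho\Delta}$; consequently $x$ is a $(\sqrt{2\rho\Delta},\Delta)$-inexact stationary point (i.e. $\mathrm{dist}(0,\partial_\Delta f(x))\le\sqrt{2\rho\Delta}$), and $x$ is a $(\sqrt{2\alpha^2\Delta/\rho},\alpha)$-Moreau stationary point.
   Context: A function $f$ is $m$-weakly convex ($m\ge 0$) if $x\mapsto f(x)+\frac{m}{2}\|x\|^2$ is convex. For $\epsilon\ge 0$, $\partial_\epsilon f(x)=\{v\in\mathbb{R}^n: f(y)\ge f(x)+\langle v,y-x\rangle-\frac{m}{2}\|y-x\|^2-\epsilon\ \ \forall y\}$. A point $x$ is an $(\eta,\epsilon)$-inexact stationary point if $\mathrm{dist}(0,\partial_\epsilon f(x))\le\eta$. For $\rho>m$ the Moreau envelope is $f_\rho(x)=\inf_{y}\{f(y)+\frac{\rho}{2}\|y-x\|^2\}$, continuously differentiable with $\nabla f_\rho(x)=\rho(x-\hat x)$; $x$ is a $(\delta,\alpha)$-Moreau stationary point if $\|\nabla f_\alpha(x)\|\le\delta$. *)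

From HB Require Import structures.
From mathcomp Require Import all_boot all_order all_algebra.
From mathcomp Require Import all_classical all_reals.
Set Implicit Arguments. Unset Strict Implicit. Unset Printing Implicit Defensive.
Import Order.TTheory GRing.Theory Num.Theory.
Local Open Scope classical_set_scope.
Local Open Scope ring_scope.

Section Defs.
Variables (R : realType) (n : nat).
Implicit Types (u v x y : 'rV[R]_n).

Definition dotp u v : R := \sum_(i < n) u ord0 i * v ord0 i.
Definition enorm u : R := Num.sqrt (dotp u u).

Definition convex_fun (g : 'rV[R]_n -> R) : Prop :=
  forall x y (t : R), 0 <= t -> t <= 1 ->
    g (t *: x + (1 - t) *: y) <= t * g x + (1 - t) * g y.

Definition weakly_convex (m : R) (f : 'rV[R]_n -> R) : Prop :=
  convex_fun (fun x => f x + m / 2 * enorm x ^+ 2).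

Definition eps_subdiff (m : R) (f : 'rV[R]_n -> R) (x : 'rV[R]_n) (eps : R)
  : set 'rV[R]_n :=
  [set v | forall y, f x + dotp v (y - x) - m / 2 * enorm (y - x) ^+ 2 - eps <= f y].

Definition dist0 (S : set 'rV[R]_n) : R := inf [set enorm v | v in S].

Definition inexact_stationary (m : R) (f : 'rV[R]_n -> R) (x : 'rV[R]_n)
  (eta eps : R) : Prop :=
  dist0 (eps_subdiff m f x eps) <= eta.

Definition moreau (f : 'rV[R]_n -> R) (rho : R) (x : 'rV[R]_n) : R :=
  inf [set f y + rho / 2 * enorm (y - x) ^+ 2 | y in [set: 'rV[R]_n]].

Definition is_prox_argmin (f : 'rV[R]_n -> R) (rho : R) (x xhat : 'rV[R]_n)
  : Prop :=
  forall y, f xhat + rho / 2 * enorm (xhat - x) ^+ 2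
            <= f y + rho / 2 * enorm (y - x) ^+ 2.

Definition is_gradient (F : 'rV[R]_n -> R) (x g : 'rV[R]_n) : Prop :=
  forall e : R, 0 < e -> exists2 d : R, 0 < d &
    forall h, enorm h < d -> `|F (x + h) - F x - dotp g h| <= e * enorm h.

Definition moreau_stationary (f : 'rV[R]_n -> R) (x : 'rV[R]_n)
  (delta alpha : R) : Prop :=
  exists g, is_gradient (moreau f alpha) x g /\ enorm g <= delta.

End Defs.

From HB Require Import structures.
From mathcomp Require Import all_boot all_order all_algebra.
From mathcomp Require Import all_classical all_reals.
From mathcomp Require Import ring lra.
Set Implicit Arguments.
Unset Strict Implicit.
Unset Printing Implicit Defensive.
Import Order.TTheory GRing.Theory Num.Theory.
Local Open Scope ring_scope.

(* For [alpha = m + rho], the prox objective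
   [phi y := f y + alpha/2 |y - x|^2] is [rho]-strongly convex, so its
   minimizer [xhat], whose value is [f_alpha(x)], has quadratic growth:
   [phi y >= f_alpha(x) + rho/2 |y - xhat|^2].  At [y = x] this gives
   [rho/2 |x - xhat|^2 <= Delta], which bounds [|w|] and [|grad f_alpha(x)|];
   expanding [|y - xhat|^2] around [x] turns the growth inequality into the
   [Delta]-subgradient inequality for [w].  Together with Young's inequality
   it also traps [f_alpha(x + h)] within [K |h|^2] of
   [f_alpha(x) + <alpha (x - xhat), h>], so [alpha (x - xhat)] is the
   gradient of [f_alpha] at [x]. *)

Section EuclideanNorm.
Variables (R : realType) (n : nat).
Implicit Types (a t : R) (u v w : 'rV[R]_n).

Lemma dotpC u v : dotp u v = dotp v u.
Proof. by apply: eq_bigr => i _; rewrite mulrC. Qed.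

Lemma dotpDl u v w : dotp (u + v) w = dotp u w + dotp v w.
Proof. by rewrite /dotp -big_split; apply: eq_bigr => i _; rewrite mxE mulrDl. Qed.

Lemma dotpZl a u w : dotp (a *: u) w = a * dotp u w.
Proof. by rewrite /dotp mulr_sumr; apply: eq_bigr => i _; rewrite mxE mulrA. Qed.

Lemma dotpNl u w : dotp (- u) w = - dotp u w.
Proof. by rewrite -scaleN1r dotpZl mulN1r. Qed.

Lemma dotpBl u v w : dotp (u - v) w = dotp u w - dotp v w.
Proof. by rewrite dotpDl dotpNl. Qed.

Lemma dotpDr u v w : dotp w (u + v) = dotp w u + dotp w v.
Proof. by rewrite dotpC dotpDl !(dotpC w). Qed.

Lemma dotpZr a u w : dotp w (a *: u) = a * dotp w u.
Proof. by rewrite dotpC dotpZl dotpC. Qed.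

Lemma dotpBr u v w : dotp w (u - v) = dotp w u - dotp w v.
Proof. by rewrite dotpC dotpBl !(dotpC w). Qed.

Lemma dotp_ge0 u : 0 <= dotp u u.
Proof. by apply: sumr_ge0 => i _; rewrite -expr2 sqr_ge0. Qed.

Lemma enorm_ge0 u : 0 <= enorm u.
Proof. exact: sqrtr_ge0. Qed.

Lemma enorm0 : enorm (0 : 'rV[R]_n) = 0.
Proof. by rewrite /enorm /dotp big1 ?sqrtr0 // => i _; rewrite mxE mul0r. Qed.

Lemma enorm_sqr u : enorm u ^+ 2 = dotp u u.
Proof. by rewrite sqr_sqrtr // dotp_ge0. Qed.

Lemma enorm_le_sqrt u c : enorm u ^+ 2 <= c -> enorm u <= Num.sqrt c.
Proof. by rewrite enorm_sqr => ?; apply: ler_wsqrtr. Qed.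

Lemma enorm_sqrZ a u : enorm (a *: u) ^+ 2 = a ^+ 2 * enorm u ^+ 2.
Proof. by rewrite !enorm_sqr dotpZl dotpZr mulrA -expr2. Qed.

Lemma enorm_sqrD u v :
  enorm (u + v) ^+ 2 = enorm u ^+ 2 + 2 * dotp u v + enorm v ^+ 2.
Proof. by rewrite !enorm_sqr !dotpDl !dotpDr (dotpC v u); ring. Qed.

Lemma enorm_sqrB u v :
  enorm (u - v) ^+ 2 = enorm u ^+ 2 - 2 * dotp u v + enorm v ^+ 2.
Proof. by rewrite !enorm_sqr !dotpBl !dotpBr (dotpC v u); ring. Qed.

Lemma enorm_distC u v : enorm (u - v) = enorm (v - u).
Proof. by rewrite /enorm -opprB dotpNl dotpC dotpNl opprK. Qed.

Lemma enorm_sqr_convex t u v :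
  enorm (t *: u + (1 - t) *: v) ^+ 2 =
  t * enorm u ^+ 2 + (1 - t) * enorm v ^+ 2 - t * (1 - t) * enorm (u - v) ^+ 2.
Proof.
rewrite !enorm_sqr !dotpBl !dotpBr !dotpDl !dotpDr !dotpZl !dotpZr (dotpC v u).
ring.
Qed.

Lemma dotp_young rho a u v : 0 < rho ->
  a * dotp u v <= rho / 2 * enorm u ^+ 2 + a ^+ 2 / (2 * rho) * enorm v ^+ 2.
Proof.
move=> rho_gt0; have := dotp_ge0 (rho *: u - a *: v).
rewrite -enorm_sqr enorm_sqrB !enorm_sqrZ dotpZl dotpZr => sq_ge0.
rewrite -(ler_pM2l (_ : 0 < 2 * rho)) ?mulr_gt0 //.
have -> : 2 * rho * (rho / 2 * enorm u ^+ 2 + a ^+ 2 / (2 * rho) * enorm v ^+ 2)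
  = rho ^+ 2 * enorm u ^+ 2 + a ^+ 2 * enorm v ^+ 2 by field; lra.
nra.
Qed.

End EuclideanNorm.

Lemma le_of_onem_mul_le (R : realFieldType) (c D : R) : 0 <= c ->
  (forall t, 0 < t -> t < 1 -> (1 - t) * c <= D) -> c <= D.
Proof.
move=> c_ge0 onemc_le; rewrite leNgt; apply/negP => Dc.
have half_le := onemc_le (1 / 2) ltac:(lra) ltac:(lra).
have c_gt0 : 0 < c by lra.
(* [t := (c - D) / 2c] gives [(1 - t) c = (c + D) / 2 > D]. *)
have t0 : 0 < (c - D) / (2 * c) by apply: divr_gt0; lra.
have t1 : (c - D) / (2 * c) < 1 by rewrite ltr_pdivrMr; lra.
have := onemc_le _ t0 t1.
have -> : (1 - (c - D) / (2 * c)) * c = c - (c - D) / 2 by field; lra.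
lra.
Qed.

Section ProximalPoint.
Variables (R : realType) (n : nat).
Implicit Types (f : 'rV[R]_n -> R) (a m rho t : R) (x y z h : 'rV[R]_n).

Definition prox_obj f a x y : R := f y + a / 2 * enorm (y - x) ^+ 2.

Lemma weakly_convex_combination m f y z t : weakly_convex m f ->
  0 <= t -> t <= 1 ->
  f (t *: y + (1 - t) *: z)
    <= t * f y + (1 - t) * f z + m / 2 * (t * (1 - t)) * enorm (y - z) ^+ 2.
Proof.
move=> wc t0 t1; have := wc y z t t0 t1; rewrite /= enorm_sqr_convex; lra.
Qed.

Lemma prox_obj_strongly_convex m rho f x y z t : weakly_convex m f ->
  0 <= t -> t <= 1 ->
  prox_obj f (m + rho) x (t *: y + (1 - t) *: z)
    <= t * prox_obj f (m + rho) x y + (1 - t) * prox_obj f (m + rho) x z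
       - rho / 2 * (t * (1 - t)) * enorm (y - z) ^+ 2.
Proof.
move=> wc t0 t1; have := weakly_convex_combination y z wc t0 t1.
rewrite /prox_obj.
have -> : t *: y + (1 - t) *: z - x = t *: (y - x) + (1 - t) *: (z - x).
  rewrite !scalerBr [(1 - t) *: x]scalerBl scale1r addrACA -opprD.
  by rewrite [t *: x + _]addrC subrK.
rewrite enorm_sqr_convex.
have -> : (y - x) - (z - x) = y - z by rewrite opprB addrA subrK.
lra.
Qed.

Lemma prox_quadratic_growth m rho f x xh y :
  0 < rho -> weakly_convex m f -> is_prox_argmin f (m + rho) x xh ->
  prox_obj f (m + rho) x xh + rho / 2 * enorm (y - xh) ^+ 2
    <= prox_obj f (m + rho) x y.
Proof.
(* Minimality at [t y + (1 - t) xh] against strong convexity on the segment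
   gives [(1 - t) rho/2 |y - xh|^2 <= prox_obj y - prox_obj xh]; then let
   [t -> 0]. *)
move=> rho_gt0 wc xh_min; rewrite -lerBrDl.
apply: le_of_onem_mul_le => [|t t0 t1]; first by rewrite mulr_ge0 ?sqr_ge0 //; lra.
have convex_le := prox_obj_strongly_convex rho x y xh wc (ltW t0) (ltW t1).
have min_le : prox_obj f (m + rho) x xh
    <= prox_obj f (m + rho) x (t *: y + (1 - t) *: xh) := xh_min _.
by rewrite -(ler_pM2l t0); lra.
Qed.

Lemma moreau_ge f a x L : (forall y, L <= prox_obj f a x y) -> L <= moreau f a x.
Proof.
move=> lb; apply: lb_le_inf; first by exists (prox_obj f a x x), x.
by move=> _ [y _ <-]; exact: lb.
Qed.

Lemma moreau_le f a x L y : (forall y, L <= prox_obj f a x y) ->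
  moreau f a x <= prox_obj f a x y.
Proof.
by move=> lb; apply: ge_inf; [exists L => _ [z _ <-]; exact: lb | exists y].
Qed.

Lemma moreau_prox f a x xh : is_prox_argmin f a x xh ->
  moreau f a x = prox_obj f a x xh.
Proof.
by move=> xh_min; apply/eqP; rewrite eq_le (moreau_le xh xh_min) (moreau_ge xh_min).
Qed.

Section AtProxPoint.
Variables (m rho : R) (f : 'rV[R]_n -> R) (x xh : 'rV[R]_n).
Hypotheses (rho_gt0 : 0 < rho) (wc : weakly_convex m f)
  (xh_min : is_prox_argmin f (m + rho) x xh).

Local Notation alpha := (m + rho).
Local Notation Delta := (f x - moreau f alpha x).

Lemma moreau_gap_ge : rho / 2 * enorm (x - xh) ^+ 2 <= Delta.
Proof.
have := prox_quadratic_growth x rho_gt0 wc xh_min.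
by rewrite (moreau_prox xh_min) /prox_obj subrr enorm0; lra.
Qed.

Lemma prox_eps_subdiff : eps_subdiff m f x Delta (rho *: (x - xh)).
Proof.
move=> y; have := prox_quadratic_growth y rho_gt0 wc xh_min.
rewrite (moreau_prox xh_min) /prox_obj (enorm_distC xh).
have -> : y - xh = (y - x) + (x - xh) by rewrite addrA subrK.
rewrite (enorm_sqrD (y - x)) dotpZl (dotpC (x - xh)).
have := mulr_ge0 (ltW rho_gt0) (sqr_ge0 (enorm (x - xh))); lra.
Qed.

Lemma prox_obj_shift_ge h y :
  moreau f alpha x + alpha * dotp (x - xh) h
    + (alpha / 2 - alpha ^+ 2 / (2 * rho)) * enorm h ^+ 2
  <= prox_obj f alpha (x + h) y.
Proof.
have := prox_quadratic_growth y rho_gt0 wc xh_min.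
have := dotp_young alpha (y - xh) h rho_gt0.
rewrite (moreau_prox xh_min) /prox_obj (enorm_distC xh).
have -> : y - (x + h) = (y - x) - h by rewrite opprD addrA.
have -> : y - xh = (y - x) + (x - xh) by rewrite addrA subrK.
rewrite (enorm_sqrB (y - x) h) (enorm_sqrD (y - x) (x - xh)) dotpDl; lra.
Qed.

Lemma moreau_shift_le h :
  moreau f alpha (x + h)
    <= moreau f alpha x + alpha * dotp (x - xh) h + alpha / 2 * enorm h ^+ 2.
Proof.
apply: le_trans (moreau_le xh (prox_obj_shift_ge h)) _.
rewrite (moreau_prox xh_min) /prox_obj !(enorm_distC xh) addrAC.
by rewrite (enorm_sqrD (x - xh) h); lra.
Qed.

Lemma moreau_linearization_error h :
  `|moreau f alpha (x + h) - moreau f alpha x - dotp (alpha *: (x - xh)) h|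
    <= (`|alpha| / 2 + alpha ^+ 2 / (2 * rho)) * enorm h ^+ 2.
Proof.
have lo := moreau_ge (prox_obj_shift_ge h); have up := moreau_shift_le h.
have h2_ge0 := sqr_ge0 (enorm h).
have c_ge0 : 0 <= alpha ^+ 2 / (2 * rho) * enorm h ^+ 2.
  by rewrite mulr_ge0 // divr_ge0 ?sqr_ge0 // mulr_ge0 // ltW.
have normD_ge0 : 0 <= (`|alpha| + alpha) * enorm h ^+ 2.
  by rewrite mulr_ge0 // -lerBlDr sub0r ler_normr lexx orbT.
have normB_ge0 : 0 <= (`|alpha| - alpha) * enorm h ^+ 2.
  by rewrite mulr_ge0 // subr_ge0 ler_norm.
rewrite dotpZl ler_norml; apply/andP; split; lra.
Qed.

End AtProxPoint.

End ProximalPoint.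

Section StationarityCertificates.
Variables (R : realType) (n : nat).

Lemma dist0_le (S : set 'rV[R]_n) v : S v -> dist0 S <= enorm v.
Proof.
move=> Sv; apply: ge_inf; last by exists v.
by exists 0 => _ [u _ <-]; exact: enorm_ge0.
Qed.

Lemma is_gradient_of_sqr_error (F : 'rV[R]_n -> R) x g (K : R) :
  (forall h, `|F (x + h) - F x - dotp g h| <= K * enorm h ^+ 2) ->
  is_gradient F x g.
Proof.
move=> err e e_gt0; have K1_gt0 : 0 < `|K| + 1 by rewrite ltr_wpDl.
exists (e / (`|K| + 1)); first by rewrite divr_gt0.
move=> h h_lt; apply: le_trans (err h) _.
have h_ge0 := enorm_ge0 h.
rewrite expr2 mulrA ler_wpM2r //; apply: (@le_trans _ _ ((`|K| + 1) * enorm h)).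
  by rewrite ler_wpM2r // (le_trans (ler_norm K)) // lerDl.
by rewrite mulrC -ler_pdivlMr // ltW.
Qed.

End StationarityCertificates.

Theorem mainTheorem9 (R : realType) (n : nat) (m : R)
  (f : 'rV[R]_n -> R) (x : 'rV[R]_n) (rho : R) (xhat : 'rV[R]_n) :
  0 <= m -> weakly_convex m f -> 0 < rho ->
  let alpha := m + rho in
  let Delta := f x - moreau f alpha x in
  is_prox_argmin f alpha x xhat ->
  let w := rho *: (x - xhat) in
  [/\ eps_subdiff m f x Delta w,
      enorm w <= Num.sqrt (2 * rho * Delta),
      inexact_stationary m f x (Num.sqrt (2 * rho * Delta)) Delta &
      moreau_stationary f x (Num.sqrt (2 * alpha ^+ 2 * Delta / rho)) alpha].
Proof.
move=> _ wc rho_gt0 alpha Delta xhat_min w.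
have gap : rho / 2 * enorm (x - xhat) ^+ 2 <= Delta :=
  moreau_gap_ge rho_gt0 wc xhat_min.
have w_sub : eps_subdiff m f x Delta w := prox_eps_subdiff rho_gt0 wc xhat_min.
have w_norm : enorm w <= Num.sqrt (2 * rho * Delta).
  apply: enorm_le_sqrt; rewrite enorm_sqrZ.
  have := ler_wpM2l (ltW rho_gt0) gap; lra.
split => //; first exact: le_trans (dist0_le w_sub) w_norm.
exists (alpha *: (x - xhat)); split.
  exact: is_gradient_of_sqr_error (moreau_linearization_error rho_gt0 wc xhat_min).
apply: enorm_le_sqrt; rewrite enorm_sqrZ ler_pdivlMr //.
have := ler_wpM2l (sqr_ge0 alpha) gap; lra.
Qed.
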